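(* Let $\Lambda$ be a basic finite dimensional algebra over an algebraically closed field and let $\rho,\rho':(\mathfrak{S}_{n+1},\le)\to\operatorname{s\tau-tilt}\Lambda$ be poset isomorphisms. If $\rho(s_i)=\rho'(s_i)$ for every $i\in\{1,\dots,n\}$, then $\rho=\rho'$.
   Context: $s_i=(i,i+1)$; left weak order: $w\le w'$ iff $w'=s_{i_k}\cdots s_{i_1}w$ with $\ell(w')=\ell(w)+k$, $\ell$ the Coxeter length. $\operatorname{s\tau-tilt}\Lambda$: isoclasses of basic support $\tau$-tilting right $\Lambda$-modules ordered by $M\ge M'$ iff $\operatorname{Fac}M\supseteq\operatorname{Fac}M'$. *)

From HB Require Import structures.
From mathcomp Require Import all_boot all_order all_algebra all_fingroup.
From mathcomp Require Import falgebra.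
Set Implicit Arguments. Unset Strict Implicit. Unset Printing Implicit Defensive.
Import GRing.Theory.
Local Open Scope ring_scope.

(* Permutations are of {1,...,n+1}, encoded as 'I_n.+1 = {0,...,n}.         *)
(* The paper's s_i = (i,i+1), i in {1..n}, is [sref i'] with i' = i-1 : 'I_n *)
(* (transposition of the 0-based points i-1 and i).                         *)
(* mathcomp perm product: (u * v) x = v (u x), so (u * v) = v o u.           *)

Definition sref (n : nat) (i : 'I_n) : {perm 'I_n.+1} :=
  tperm (inord i) (inord i.+1).

(* [wordprod l] = s_{l_1} o s_{l_2} o ... o s_{l_k} (as functions). *)
Definition wordprod (n : nat) (l : seq 'I_n) : {perm 'I_n.+1} :=
  foldr (fun i u => (u * sref i)%g) 1%g l.

Definition is_coxeter_length (n : nat) (w : {perm 'I_n.+1}) (m : nat) : Prop :=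
  (exists l : seq 'I_n, size l = m /\ wordprod l = w) /\
  (forall l : seq 'I_n, wordprod l = w -> m <= size l)%N.

(* Left weak order: w <= w' iff w' = s_{i_k} ... s_{i_1} w with
   l(w') = l(w) + k.  Here [w' = s_{i_k} o ... o s_{i_1} o w] is
   [w' = w * (wordprod (rev ...))], i.e. [w' = w * wordprod l] with
   l = [:: i_k; ...; i_1]. *)
Definition weak_le (n : nat) (w w' : {perm 'I_n.+1}) : Prop :=
  exists (l : seq 'I_n) (m : nat),
    w' = (w * wordprod l)%g /\ is_coxeter_length w m /\
    is_coxeter_length w' (m + size l).

(* Part 2: finite dimensional right modules over a finite dimensional       *)
(* algebra A over a field k.  A module is a dimension d and a matrix action *)
(* on row vectors: v . a = v *m ract a.                                     *)

Section Modules.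
Variables (k : fieldType) (A : falgType k).

Record rmod := RMod { rdim : nat; ract : A -> 'M[k]_rdim }.

Definition is_rmod (M : rmod) : Prop :=
  [/\ forall (c : k) (a b : A), ract M (c *: a + b) = c *: ract M a + ract M b,
      ract M 1 = 1%:M &
      forall a b : A, ract M (a * b) = ract M a *m ract M b].

(* module homomorphisms M -> N, acting on row vectors v |-> v *m f *)
Definition is_hom (M N : rmod) (f : 'M[k]_(rdim M, rdim N)) : Prop :=
  forall a : A, ract M a *m f = f *m ract N a.

Definition iso (M N : rmod) : Prop :=
  exists (f : 'M[k]_(rdim M, rdim N)) (g : 'M[k]_(rdim N, rdim M)),
    [/\ is_hom f, is_hom g, f *m g = 1%:M & g *m f = 1%:M].

Definition zmod0 : rmod := @RMod 0 (fun _ => 0).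

Definition dsum (M N : rmod) : rmod :=
  @RMod (rdim M + rdim N)%N
    (fun a => block_mx (ract M a) 0 0 (ract N a)).

Fixpoint mpow (M : rmod) (r : nat) : rmod :=
  if r is r'.+1 then dsum M (mpow M r') else zmod0.

Definition dimA : nat := \dim (fullv : {vspace A}).
Definition bA : dimA.-tuple A := vbasis fullv.

Definition rmulmx (a : A) : 'M[k]_dimA :=
  \matrix_(i < dimA, j < dimA) coord bA j (bA`_i * a).
Definition lmulmx (a : A) : 'M[k]_dimA :=
  \matrix_(i < dimA, j < dimA) coord bA j (a * bA`_i).

Definition regmod : rmod := @RMod dimA rmulmx.

Definition inFac (M N : rmod) : Prop :=
  exists (r : nat) (f : 'M[k]_(rdim (mpow M r), rdim N)),
    is_hom f /\ row_full f.

(* M <= M' in s-tau-tilt iff Fac M is contained in Fac M' *)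
Definition fac_le (M M' : rmod) : Prop :=
  forall N : rmod, is_rmod N -> inFac M N -> inFac M' N.

Definition summand (N M : rmod) : Prop :=
  exists N' : rmod, is_rmod N' /\ iso M (dsum N N').

Definition indec (M : rmod) : Prop :=
  [/\ is_rmod M, (0 < rdim M)%N &
    ~ exists N1 N2 : rmod,
        [/\ is_rmod N1, is_rmod N2, (0 < rdim N1)%N, (0 < rdim N2)%N &
            iso M (dsum N1 N2)]].

Definition basic_mod (M : rmod) : Prop :=
  ~ exists N : rmod, indec N /\ summand (dsum N N) M.

Definition num_summands (M : rmod) (r : nat) : Prop :=
  exists l : seq rmod,
    [/\ size l = r,
        forall i, (i < r)%N -> indec (nth zmod0 l i) /\ summand (nth zmod0 l i) M,
        forall i j, (i < r)%N -> (j < r)%N -> iso (nth zmod0 l i) (nth zmod0 l j) -> i = j &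
        forall N, indec N -> summand N M -> exists2 i, (i < r)%N & iso N (nth zmod0 l i)].

Definition projective (P : rmod) : Prop :=
  is_rmod P /\ exists r : nat, summand P (mpow regmod r).

Definition Hom0 (M N : rmod) : Prop :=
  forall f : 'M[k]_(rdim M, rdim N), is_hom f -> f = 0.

(* Hom_A(P, A_A) : matrices X : 'M_(rdim P, dimA) with is_hom X (P -> regmod); *)
(* it is a left A-module via a.X = X *m lmulmx a  (i.e. (a f)(x) = a f(x)).  *)
(* N is (isomorphic to) D Hom_A(P, A_A) via the pairing B iff B is a perfect *)
(* pairing N x Hom_A(P,A_A) -> k with  <t.a, X> = <t, a.X>.                  *)
Definition pairing (N P : rmod) (B : 'M[k]_(rdim N, rdim P * dimA))
    (t : 'rV[k]_(rdim N)) (X : 'M[k]_(rdim P, dimA)) : k :=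
  (t *m B *m (mxvec X)^T) 0 0.

Definition is_nakayama (P N : rmod) (B : 'M[k]_(rdim N, rdim P * dimA)) : Prop :=
  [/\ is_rmod N,
      forall t, (forall X, @is_hom P regmod X -> pairing B t X = 0) -> t = 0,
      forall X, @is_hom P regmod X -> (forall t, pairing B t X = 0) -> X = 0 &
      forall t X a, @is_hom P regmod X ->
        pairing B (t *m ract N a) X = pairing B t (X *m lmulmx a)].

Definition right_minimal (P M : rmod) (q : 'M[k]_(rdim P, rdim M)) : Prop :=
  forall h : 'M[k]_(rdim P), @is_hom P P h -> h *m q = q -> h \in unitmx.

(* Hom_A(M, tau M) = 0, with tau M = D Tr M computed from a minimal projective
   presentation P1 --p--> P0 --q--> M --> 0 : tau M = Ker (nu p : nu P1 -> nu P0). *)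
Definition tau_rigid (M : rmod) : Prop :=
  exists (P1 P0 : rmod) (p : 'M[k]_(rdim P1, rdim P0)) (q : 'M[k]_(rdim P0, rdim M))
         (N1 N0 : rmod) (B1 : 'M[k]_(rdim N1, rdim P1 * dimA))
         (B0 : 'M[k]_(rdim N0, rdim P0 * dimA)) (g : 'M[k]_(rdim N1, rdim N0)),
    [/\ [/\ projective P1, projective P0, is_hom p, is_hom q & row_full q],
        (* exactness at P0 : Im p = Ker q *)
        p *m q = 0 /\ (\rank p + \rank q)%N = rdim P0,
        (* minimality: q and p (onto its image) are projective covers *)
        right_minimal q /\ right_minimal p,
        (* g = nu p *)
        [/\ is_nakayama B1, is_nakayama B0, is_hom g &
            forall t X, @is_hom P0 regmod X ->
              pairing B0 (t *m g) X = pairing B1 t (p *m X)] &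
        (* Hom(M, Ker g) = 0 *)
        forall h : 'M[k]_(rdim M, rdim N1), is_hom h -> h *m g = 0 -> h = 0].

(* support tau-tilting (via support tau-tilting pairs (M, P)) *)
Definition support_tau_tilting (M : rmod) : Prop :=
  is_rmod M /\ tau_rigid M /\
  exists (P : rmod) (a b c : nat),
    [/\ projective P /\ Hom0 P M, num_summands M a, num_summands P b,
        num_summands regmod c & (a + b = c)%N].

(* elements of s-tau-tilt A : basic support tau-tilting modules *)
Definition stt (M : rmod) : Prop := support_tau_tilting M /\ basic_mod M.

Definition basic_algebra : Prop := basic_mod regmod.

(* rho : S_{n+1} -> s-tau-tilt A is a poset isomorphism; rho is represented
   by a choice of module in each isoclass. *)
Definition poset_iso_stt (n : nat) (rho : {perm 'I_n.+1} -> rmod) : Prop :=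
  [/\ forall w, stt (rho w),
      forall w w', weak_le w w' <-> fac_le (rho w) (rho w'),
      forall w w', iso (rho w) (rho w') -> w = w' &
      forall M, stt M -> exists w, iso M (rho w)].

End Modules.

From HB Require Import structures.
From mathcomp Require Import all_boot all_order all_algebra all_fingroup.
From mathcomp Require Import falgebra.
From mathcomp Require Import zify.
Set Implicit Arguments. Unset Strict Implicit. Unset Printing Implicit Defensive.

(* rho and rho' differ by an automorphism phi of the left weak order on
   S_{n+1} fixing every s_i, and the weak order is inclusion of inversion
   sets; so it suffices to show that such a phi is the identity.  Induct on the number of inversions of w.  If w has two lower covers
   w s_j and w s_k, both are fixed and their inversion sets cover that of w, so
   w <= phi w, and likewise w <= phi^-1 w; hence phi w = w.  If w has a single
   lower cover u, then phi w is an upper cover of u.  If phi w has two lower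
   covers, it is fixed by the first case and injectivity gives phi w = w;
   otherwise w and phi w are both determined by u together with the longest
   elements of maximal parabolic subgroups lying above them, and these are
   joins of simple reflections, hence fixed by phi. *)

Lemma exists_step_between (T : Type) (r : rel T) (f : nat -> T) (i j : nat) :
  irreflexive r -> (forall x y z, r x z -> r x y || r y z) ->
  i <= j -> r (f i) (f j) -> exists2 m, i <= m < j & r (f m) (f m.+1).
Proof.
move=> irr cotr; elim: j => [|j IH]; first by rewrite leqn0 => /eqP->; rewrite irr.
rewrite leq_eqVlt => /orP[/eqP-> | ij]; first by rewrite irr.
move=> /(cotr _ (f j)) /orP[/(IH ij) [m /andP[im mj] fm] | fj].
  by exists m; rewrite // im ltnW.
by exists j; rewrite // ltnSn andbT.
Qed.

Lemma ltn_cotrans x y z : x < z -> (x < y) || (y < z).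
Proof. by case: (ltnP x y) => // yx /(leq_ltn_trans yx) ->. Qed.

Lemma exists_rise (f : nat -> nat) (i j : nat) :
  i <= j -> f i < f j -> exists2 m, i <= m < j & f m < f m.+1.
Proof. exact: exists_step_between ltnn ltn_cotrans. Qed.

Lemma exists_drop (f : nat -> nat) (i j : nat) :
  i <= j -> f j < f i -> exists2 m, i <= m < j & f m.+1 < f m.
Proof.
apply: (@exists_step_between _ (fun x y => y < x)) => [x|x y z /(ltn_cotrans y)].
  exact: ltnn.
by rewrite orbC.
Qed.

Lemma interval_ends_eq (N p q a b : nat) : p < q <= N -> a < b <= N ->
  (forall c, c < N -> (p <= c < q) = (a <= c < b)) -> p = a /\ q = b.
Proof. by move=> h1 h2 H; move: (H p) (H a) (H q.-1) (H b.-1); lia. Qed.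

Section Inversions.
Variable n : nat.
Local Notation T := 'I_n.+1.
Local Notation P := {perm T}.
Implicit Types (w v u : P) (a b x y : T).

Definition invset w : {set T * T} := [set p : T * T | (p.1 < p.2) && (w p.2 < w p.1)].
Definition ninv w : nat := #|invset w|.
Definition vpos w (m : nat) : T := (w^-1)%g (inord m).
(* Since (w * sref k) x = sref k (w x), right multiplication by sref k swaps
   the values k and k.+1; [descent w k] says that they occur in decreasing
   order, i.e. that w * sref k lies below w. *)
Definition descent w (k : 'I_n) : bool := vpos w k.+1 < vpos w k.

Lemma mem_invset w a b : ((a, b) \in invset w) = (a < b) && (w b < w a).
Proof. by rewrite inE. Qed.

Lemma vposK w x : vpos w (w x) = x.
Proof. by rewrite /vpos inord_val permK. Qed.

Lemma vposKV w (m : nat) : m <= n -> w (vpos w m) = m :> nat.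
Proof. by move=> hm; rewrite /vpos permKV inordK. Qed.

Lemma eq_vpos w (m : nat) a : m <= n -> (a == vpos w m) = (w a == m :> nat).
Proof. by move=> hm; rewrite -(inj_eq (@perm_inj _ w)) -val_eqE /= vposKV. Qed.

Lemma vpos_inj w (i j : nat) : i <= n -> j <= n -> vpos w i = vpos w j -> i = j.
Proof. by move=> hi hj e; rewrite -(vposKV w hi) -(vposKV w hj) e. Qed.

Lemma mem_invset_vpos w (i j : nat) : i <= n -> j <= n ->
  ((vpos w i, vpos w j) \in invset w) = (vpos w i < vpos w j) && (j < i).
Proof. by move=> hi hj; rewrite mem_invset !vposKV. Qed.

Lemma ascentE w (k : 'I_n) : (vpos w k < vpos w k.+1) = ~~ descent w k.
Proof.
have hk := ltn_ord k.
have /eqP neq : vpos w k != vpos w k.+1 :> nat.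
  by apply/eqP => /val_inj /(vpos_inj (ltnW hk) hk); lia.
by rewrite /descent -leqNgt; lia.
Qed.

Lemma sref_val (k : 'I_n) x :
  nat_of_ord (sref k x) =
  if x == k :> nat then k.+1 else if x == k.+1 :> nat then nat_of_ord k else nat_of_ord x.
Proof.
have hk := ltn_ord k.
have hk' : k < n.+1 := ltnW hk.
rewrite /sref permE /= -!val_eqE /= !inordK //.
by case: ifP => _; [rewrite inordK | case: ifP => _; rewrite ?inordK].
Qed.

Lemma ltn_sref (k : 'I_n) x y : x != y ->
  (sref k x < sref k y) =
  (x < y) (+) ((x == k :> nat) && (y == k.+1 :> nat) || (x == k.+1 :> nat) && (y == k :> nat)).
Proof.
rewrite -val_eqE !sref_val => /eqP xy.
by do ?[case: eqP => /=]; lia.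
Qed.

Lemma mem_invset_mulsref w (k : 'I_n) a b :
  ((a, b) \in invset (w * sref k)%g) =
  ((a, b) \in invset w) (+) ((a < b) &&
    ((a == vpos w k) && (b == vpos w k.+1) || (a == vpos w k.+1) && (b == vpos w k))).
Proof.
have hk := ltn_ord k.
rewrite !mem_invset !permM; case: (ltnP a b) => ab //=.
rewrite ltn_sref; last by apply: contraTneq ab => /perm_inj ->; rewrite ltnn.
rewrite !eq_vpos ?(ltnW hk) //; congr (_ (+) _).
by rewrite orbC [X in X || _]andbC [X in _ || X]andbC.
Qed.

Lemma mem_invset_descent w (k : 'I_n) : ((vpos w k.+1, vpos w k) \in invset w) = descent w k.
Proof. by have hk := ltn_ord k; rewrite (mem_invset_vpos w hk (ltnW hk)) ltnSn andbT. Qed.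

Lemma ascent_notin_invset w (k : 'I_n) : (vpos w k, vpos w k.+1) \notin invset w.
Proof.
have hk := ltn_ord k.
by rewrite (mem_invset_vpos w (ltnW hk) hk) (ltnNge k.+1 k) leqnSn andbF.
Qed.

Lemma invset_mulsref_ascent w (k : 'I_n) : ~~ descent w k ->
  invset (w * sref k)%g = (vpos w k, vpos w k.+1) |: invset w.
Proof.
rewrite -ascentE => asc; apply/setP => -[a b].
rewrite mem_invset_mulsref in_setU1 xpair_eqE.
case: (boolP ((a == vpos w k) && (b == vpos w k.+1))) => [/andP[/eqP-> /eqP->] | _] /=.
  by rewrite asc (negPf (ascent_notin_invset w k)).
by case: eqP => [->|]; case: eqP => [->|]; rewrite ?andbF ?addbF // ltnNge (ltnW asc) addbF.
Qed.

Lemma invset_mulsref_descent w (k : 'I_n) : descent w k ->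
  invset (w * sref k)%g = invset w :\ (vpos w k.+1, vpos w k).
Proof.
move=> desc; apply/setP => -[a b].
rewrite mem_invset_mulsref in_setD1 xpair_eqE.
case: (boolP ((a == vpos w k.+1) && (b == vpos w k))) => [/andP[/eqP-> /eqP->] | _] /=.
  by rewrite mem_invset_descent desc [_ < _]desc orbT.
by case: eqP => [->|]; case: eqP => [->|]; rewrite ?andbF ?addbF // ltnNge (ltnW desc) addbF.
Qed.

Lemma ninv_mulsref_ascent w (k : 'I_n) : ~~ descent w k -> ninv (w * sref k)%g = (ninv w).+1.
Proof. by move=> asc; rewrite /ninv invset_mulsref_ascent // cardsU1 ascent_notin_invset. Qed.

Lemma ninv_mulsref_descent w (k : 'I_n) : descent w k -> (ninv (w * sref k)%g).+1 = ninv w.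
Proof.
move=> desc; rewrite /ninv invset_mulsref_descent //.
by rewrite [RHS](cardsD1 (vpos w k.+1, vpos w k)) mem_invset_descent desc.
Qed.

Lemma ninv_mulsref_le w (k : 'I_n) : ninv (w * sref k)%g <= (ninv w).+1.
Proof.
have [desc|asc] := boolP (descent w k); last by rewrite ninv_mulsref_ascent.
by rewrite -(ninv_mulsref_descent desc) leqW.
Qed.

Lemma vpos_mulsref w (k : 'I_n) :
  vpos (w * sref k)%g k = vpos w k.+1 /\ vpos (w * sref k)%g k.+1 = vpos w k.
Proof. by rewrite /vpos invMg !permM /sref tpermV tpermL tpermR. Qed.

Lemma descent_mulsref w (k : 'I_n) : descent (w * sref k)%g k = ~~ descent w k.
Proof. by rewrite /descent; case: (vpos_mulsref w k) => -> ->; rewrite ascentE. Qed.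

Lemma card_ltn_ord (m : nat) : m <= n.+1 -> #|[set z : T | z < m]| = m.
Proof.
move=> hm; have -> : [set z : T | z < m] = widen_ord hm @: [set: 'I_m].
  apply/setP => z; rewrite inE; apply/idP/imsetP => [zm | [x _ ->]]; last exact: (ltn_ord x).
  by exists (Ordinal zm); rewrite ?inE //; apply: val_inj.
by rewrite card_imset ?cardsT ?card_ord // => x y [] /val_inj.
Qed.

Lemma card_perm_below w x : #|[set y | w y < w x]| = w x.
Proof.
have -> : [set y | w y < w x] = w @^-1: [set z : T | z < w x] by apply/setP => y; rewrite !inE.
by rewrite card_preimset ?card_ltn_ord ?(ltnW (ltn_ord _)) //; exact: perm_inj.
Qed.

Lemma invset_inj w v : invset w = invset v -> w = v.
Proof.
move=> e; apply/permP => x; apply: val_inj => /=.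
rewrite -card_perm_below -(card_perm_below v); apply: eq_card => y; rewrite !inE.
have neq u : y != x -> u y != u x :> nat by move=> yx; rewrite val_eqE (inj_eq perm_inj).
case: (ltngtP y x) => yx; last by rewrite (val_inj yx) !ltnn.
  have yx' : y != x by rewrite neq_ltn yx.
  have := congr1 (fun A : {set T * T} => (y, x) \in A) e; rewrite /= !mem_invset yx /=.
  by move: (neq w yx') (neq v yx'); lia.
by have := congr1 (fun A : {set T * T} => (x, y) \in A) e; rewrite /= !mem_invset yx.
Qed.

Lemma descent_exists w : invset w != set0 -> exists k, descent w k.
Proof.
case/set0Pn => -[a b]; rewrite mem_invset => /andP[ab ba].
have ab' : nat_of_ord (vpos w (w a)) < vpos w (w b) by rewrite !vposK.
have [m /andP[bm ma] dm] := exists_drop (f := fun m => nat_of_ord (vpos w m)) (ltnW ba) ab'.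
have mn : m < n by move: (leq_ord (w a)); lia.
by exists (Ordinal mn).
Qed.

End Inversions.

Section WeakOrder.
Variable n : nat.
Local Notation T := 'I_n.+1.
Local Notation P := {perm T}.
Implicit Types (w v u : P) (l : seq 'I_n).

Lemma wordprod_rcons l (k : 'I_n) : wordprod (rcons l k) = (sref k * wordprod l)%g.
Proof. by elim: l => [|i l IH] /=; rewrite ?mul1g ?mulg1 // IH mulgA. Qed.

Lemma ninv_mul_wordprod w l : ninv (w * wordprod l)%g <= ninv w + size l.
Proof.
elim: l => [|i l IH] /=; first by rewrite mulg1 addn0.
by rewrite mulgA addnS (leq_trans (ninv_mulsref_le _ i)).
Qed.

Lemma invset1 : invset (1%g : P) = set0.
Proof. by apply/setP => -[a b]; rewrite mem_invset !perm1 inE; case: ltngtP. Qed.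

Lemma reduced_word w : exists2 l, size l = ninv w & wordprod l = w.
Proof.
move hw: (ninv w) => m; elim: m w hw => [|m IH] w hw.
  by exists [::] => //=; apply: invset_inj; rewrite invset1 (cards0_eq hw).
have /descent_exists [k dk] : invset w != set0 by rewrite -cards_eq0 -/(ninv w) hw.
have [l hl el] : exists2 l, size l = m & wordprod l = (w * sref k)%g.
  by apply: IH; apply/eqP; rewrite -eqSS (ninv_mulsref_descent dk) hw.
by exists (k :: l); rewrite /= ?hl // el -mulgA tperm2 mulg1.
Qed.

Lemma coxeter_length_ninv w : is_coxeter_length w (ninv w).
Proof.
split; first by have [l] := reduced_word w; exists l.
by move=> l <-; have := ninv_mul_wordprod 1 l; rewrite mul1g /ninv invset1 cards0.
Qed.

Lemma coxeter_length_uniq w (m : nat) : is_coxeter_length w m -> m = ninv w.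
Proof.
case=> [[l [<- el]] min]; have [[l' [<- el']] min'] := coxeter_length_ninv w.
by apply/eqP; rewrite eqn_leq min // min'.
Qed.

Lemma weak_le_word w v :
  weak_le w v <-> exists2 l, v = (w * wordprod l)%g & ninv v = ninv w + size l.
Proof.
split=> [[l [m [ev [/coxeter_length_uniq hw /coxeter_length_uniq hv]]]] | [l ev hv]].
  by exists l; rewrite // -hv hw.
by exists l, (ninv w); rewrite -hv; split => //; split; exact: coxeter_length_ninv.
Qed.

Lemma invset_sub_mul_wordprod w l :
  ninv (w * wordprod l)%g = ninv w + size l -> invset w \subset invset (w * wordprod l)%g.
Proof.
elim: l => [|i l IH] /=; first by rewrite mulg1.
rewrite mulgA addnS => hl.
have hwl : ninv (w * wordprod l)%g = ninv w + size l.
  apply/eqP; rewrite eqn_leq ninv_mul_wordprod -ltnS -hl.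
  exact: ninv_mulsref_le.
have [desc|asc] := boolP (descent (w * wordprod l)%g i).
  by move: (ninv_mulsref_descent desc); rewrite hl hwl; lia.
by rewrite invset_mulsref_ascent // (subset_trans (IH hwl)) ?subsetU1.
Qed.

Lemma invset_proper_step w v : invset w \proper invset v ->
  exists2 k : 'I_n, ~~ descent w k & (vpos w k, vpos w k.+1) \in invset v.
Proof.
rewrite properEneq => /andP[ne sub].
have /set0Pn [[a b]] : invset v :\: invset w != set0.
  by rewrite setD_eq0; apply: contra ne => vw; rewrite eqEsubset sub.
rewrite in_setD !mem_invset => /andP[nw /andP[ab vba]]; rewrite ab /= in nw.
have wab : w a < w b.
  have : w a != w b :> nat by rewrite val_eqE (inj_eq perm_inj) neq_ltn ab.
  by move: nw; lia.
have vab : nat_of_ord (v (vpos w (w b))) < v (vpos w (w a)) by rewrite !vposK.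
have [m /andP[am mb] drop] :=
  exists_drop (f := fun m => nat_of_ord (v (vpos w m))) (ltnW wab) vab.
have mn : m < n by move: (leq_ord (w b)); lia.
have asc : ~~ descent w (Ordinal mn).
  rewrite -mem_invset_descent; apply: contraL drop => /(subsetP sub).
  by rewrite mem_invset /= -leqNgt => /andP[_ /ltnW].
exists (Ordinal mn) => //; rewrite mem_invset /= drop andbT.
by move: asc; rewrite -ascentE.
Qed.

Lemma word_of_invset_sub w v : invset w \subset invset v ->
  exists2 l, v = (w * wordprod l)%g & ninv v = ninv w + size l.
Proof.
move: {2}(ninv v - ninv w) (leqnn (ninv v - ninv w)) => d.
elim: d w => [|d IH] w hd sub;
  have [/invset_inj <-|ne] := eqVneq (invset w) (invset v);
  try by exists [::]; rewrite ?mulg1 ?addn0.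
  by move: hd; rewrite leqn0 subn_eq0 leqNgt proper_card // properEneq ne.
have /invset_proper_step [k asc kv] : invset w \proper invset v.
  by rewrite properEneq ne.
have sub' : invset (w * sref k)%g \subset invset v.
  by rewrite invset_mulsref_ascent // subUset sub1set kv.
have [|l ev hv] := IH _ _ sub'.
  have le : ninv (w * sref k)%g <= ninv v := subset_leq_card sub'.
  by move: hd le; rewrite ninv_mulsref_ascent //; lia.
exists (rcons l k); first by rewrite wordprod_rcons mulgA.
by rewrite hv ninv_mulsref_ascent // size_rcons addSnnS.
Qed.

Lemma weak_leE w v : weak_le w v <-> invset w \subset invset v.
Proof.
rewrite weak_le_word; split=> [[l -> hl] | /word_of_invset_sub //].
exact: invset_sub_mul_wordprod.
Qed.

End WeakOrder.

Section Parabolic.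
Variable n : nat.
Local Notation T := 'I_n.+1.
Local Notation P := {perm T}.
Implicit Types (w v y : P) (a b x : T).

Lemma vpos1 (m : nat) : vpos (1%g : P) m = inord m.
Proof. by rewrite /vpos invg1 perm1. Qed.

Lemma invset_sref (i : 'I_n) : invset (sref i) = [set (inord i, inord i.+1)].
Proof.
have hi := ltn_ord i.
have asc : ~~ descent (1%g : P) i.
  by rewrite /descent !vpos1 !inordK // -?ltnNge ?ltnSn //; exact: ltnW.
by rewrite -[sref i]mul1g invset_mulsref_ascent // invset1 setU0 !vpos1.
Qed.

(* [parabolic_longest c] reverses the blocks [0, c] and [c.+1, n]: it is the
   longest element of the parabolic subgroup generated by the sref i, i != c. *)
Definition parabolic_rev (c : 'I_n) x : T :=
  if x <= c then inord (c - x) else inord (n + c.+1 - x).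

Lemma parabolic_rev_val (c : 'I_n) x :
  nat_of_ord (parabolic_rev c x) = if x <= c then c - x else n + c.+1 - x.
Proof.
have [hc hx] := (ltn_ord c, ltn_ord x).
by rewrite /parabolic_rev; case: ifP => cx; rewrite inordK //; lia.
Qed.

Lemma parabolic_rev_inj (c : 'I_n) : injective (parabolic_rev c).
Proof.
move=> x y /(congr1 val); rewrite /= !parabolic_rev_val => e; apply/val_inj => /=.
have [[hc hx] hy] := (ltn_ord c, ltn_ord x, ltn_ord y).
by move: e; case: ifP => h1; case: ifP => h2; lia.
Qed.

Definition parabolic_longest (c : 'I_n) : P := perm (@parabolic_rev_inj c).

Lemma mem_invset_parabolic_longest (c : 'I_n) a b :
  ((a, b) \in invset (parabolic_longest c)) = (a < b) && ~~ ((a <= c) && (c < b)).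
Proof.
rewrite mem_invset !permE !parabolic_rev_val.
have [[hc ha] hb] := (ltn_ord c, ltn_ord a, ltn_ord b).
by case: ifP => h1; case: ifP => h2; lia.
Qed.

Lemma parabolic_longest_le (c : 'I_n) v :
  invset (parabolic_longest c) \subset invset v <->
  forall i : 'I_n, i != c -> invset (sref i) \subset invset v.
Proof.
split=> [sub i ic | H].
  apply: subset_trans sub; rewrite invset_sref sub1set mem_invset_parabolic_longest.
  have hi := ltn_ord i; rewrite !inordK //; last exact: ltnW.
  by move: ic; rewrite -val_eqE /=; lia.
apply/subsetP => -[a b]; rewrite mem_invset_parabolic_longest mem_invset.
move=> /andP[ab nc]; rewrite ab /=.
have vab : v a != v b :> nat by rewrite val_eqE (inj_eq perm_inj) neq_ltn ab.
rewrite ltnNge leq_eqVlt (negPf vab) /=; apply/negP => vab'.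
have fab : nat_of_ord (v (inord a)) < v (inord b) by rewrite !inord_val.
have [m /andP[am mb] rise] :=
  exists_rise (f := fun m => nat_of_ord (v (inord m))) (ltnW ab) fab.
have mn : m < n by move: (leq_ord b); lia.
have mc : Ordinal mn != c by rewrite -val_eqE /=; move: nc; lia.
have : (inord m, inord m.+1) \in invset v.
  by apply: (subsetP (H _ mc)); rewrite invset_sref inE.
by rewrite mem_invset => /andP[_]; rewrite ltnNge (ltnW rise).
Qed.

Definition single_descent w (j : 'I_n) : Prop :=
  descent w j /\ forall k, descent w k -> k = j.

Lemma descent_cases w (j : 'I_n) : descent w j ->
  (exists2 k, k != j & descent w k) \/ single_descent w j.
Proof.
move=> dj; have [/existsP [k /andP[kj dk]] | none] := boolP [exists k, (k != j) && descent w k].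
  by left; exists k.
right; split=> // k dk; apply/eqP; apply: contraNT none => kj.
by apply/existsP; exists k; rewrite kj.
Qed.

Lemma single_descent_invset w (j : 'I_n) a b : single_descent w j ->
  (a, b) \in invset w -> vpos w j.+1 <= a /\ b <= vpos w j.
Proof.
case=> _ only; rewrite mem_invset => /andP[ab ba].
pose f m := nat_of_ord (vpos w m).
have drop_j i k : i <= k <= n -> f k < f i -> i <= j < k.
  move=> /andP[ik kn] fki; have [m /andP[im mk] dm] := exists_drop ik fki.
  have mn : m < n by apply: leq_trans mk kn.
  by have /(congr1 val) /= <- := only (Ordinal mn) dm; rewrite im.
have [fa fb] : f (w a) = a /\ f (w b) = b by rewrite /f !vposK.
have /andP[bj ja] : w b <= j < w a.
  by apply: drop_j; [rewrite (ltnW ba) leq_ord | rewrite fa fb].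
split; rewrite leqNgt; apply/negP => lt.
  have /andP[] : j.+1 <= j < w a by apply: drop_j; [rewrite ja leq_ord | rewrite fa].
  by rewrite ltnn.
have : w b <= j < j by apply: drop_j; [rewrite bj; exact: ltnW (ltn_ord j) | rewrite fb].
by rewrite ltnn andbF.
Qed.

Lemma single_descent_le_parabolic w (j c : 'I_n) : single_descent w j ->
  (invset w \subset invset (parabolic_longest c)) = ~~ ((vpos w j.+1 <= c) && (c < vpos w j)).
Proof.
move=> sd; apply/subsetP/idP => [sub | nc [a b] ab].
  have /sub : (vpos w j.+1, vpos w j) \in invset w by rewrite mem_invset_descent; case: sd.
  by rewrite mem_invset_parabolic_longest => /andP[].
have [ja bj] := single_descent_invset sd ab.
rewrite mem_invset_parabolic_longest; move: ab; rewrite mem_invset => /andP[-> _] /=.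
by apply: contra nc => /andP[ac cb]; rewrite (leq_trans ja ac) (leq_trans cb bj).
Qed.

Lemma single_descent_eq w y (j k : 'I_n) : single_descent w j -> single_descent y k ->
  (w * sref j)%g = (y * sref k)%g ->
  (forall c, (invset w \subset invset (parabolic_longest c)) =
             (invset y \subset invset (parabolic_longest c))) ->
  w = y.
Proof.
move=> sw sy e same; have [[dj _] [dk _]] := (sw, sy).
have [e1 e2] : vpos w j.+1 = vpos y k.+1 :> nat /\ vpos w j = vpos y k :> nat.
  apply: (@interval_ends_eq n).
  - by rewrite [_ < _]dj leq_ord.
  - by rewrite [_ < _]dk leq_ord.
  move=> c cn; apply: negb_inj.
  rewrite -(single_descent_le_parabolic (Ordinal cn) sw).
  by rewrite -(single_descent_le_parabolic (Ordinal cn) sy).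
have invsetE (u : P) (i : 'I_n) :
    descent u i -> invset u = (vpos u i.+1, vpos u i) |: invset (u * sref i)%g.
  by move=> d; rewrite invset_mulsref_descent // setD1K // mem_invset_descent.
apply: invset_inj; rewrite (invsetE _ _ dj) (invsetE _ _ dk) e.
by congr (_ |: _); congr (_, _); apply: val_inj.
Qed.

End Parabolic.

Section Automorphisms.
Variable n : nat.
Local Notation T := 'I_n.+1.
Local Notation P := {perm T}.
Implicit Types (R : P -> P -> Prop) (w v y z u : P).

(* The graph of an automorphism of the weak order (in the form of weak_leE)
   fixing the simple reflections; it is a relation because rho'^-1 o rho is
   only determined up to isomorphism of modules. *)
Record sref_fixing_auto R : Prop := SrefFixingAuto {
  auto_total : forall w, exists v, R w v;
  auto_functional : forall w v v', R w v -> R w v' -> v = v';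
  auto_injective : forall w w' v, R w v -> R w' v -> w = w';
  auto_surjective : forall v, exists w, R w v;
  auto_invset_sub : forall w w' v v', R w v -> R w' v' ->
    (invset w \subset invset w' <-> invset v \subset invset v');
  auto_sref : forall i, R (sref i) (sref i) }.

Lemma auto_converse R : sref_fixing_auto R -> sref_fixing_auto (fun v w => R w v).
Proof.
case=> tot fun_ inj surj sub fix_sref; split=> //.
- by move=> w v v'; exact: inj.
- by move=> w w' v; exact: fun_.
- by move=> w w' v v' r r'; rewrite (sub _ _ _ _ r r').
Qed.

Lemma auto_fixed_of_le R w : sref_fixing_auto R ->
  (forall y, R w y -> invset w \subset invset y) ->
  (forall z, R z w -> invset w \subset invset z) -> R w w.
Proof.
move=> hR le_img le_pre; have [y r] := auto_total hR w; have [z r'] := auto_surjective hR w.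
have yw : invset y \subset invset w by apply/(auto_invset_sub hR r r'); exact: le_pre.
suff ey : y = w by rewrite -{2}ey.
by apply: invset_inj; apply/eqP; rewrite eqEsubset yw le_img.
Qed.

Lemma auto_fixed_parabolic_longest R (c : 'I_n) : sref_fixing_auto R ->
  R (parabolic_longest c) (parabolic_longest c).
Proof.
suff le_img R' : sref_fixing_auto R' ->
    forall y, R' (parabolic_longest c) y -> invset (parabolic_longest c) \subset invset y.
  by move=> hR; apply: auto_fixed_of_le (le_img _ hR) (le_img _ (auto_converse hR)).
move=> hR y r; apply/parabolic_longest_le => i ic.
apply/(auto_invset_sub hR (auto_sref hR i) r).
by apply: (parabolic_longest_le c (parabolic_longest c)).1.
Qed.

Lemma auto_le_of_two_descents R w y (j k : 'I_n) : sref_fixing_auto R ->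
  (forall u, ninv u < ninv w -> R u u) ->
  descent w j -> descent w k -> j != k -> R w y -> invset w \subset invset y.
Proof.
move=> hR fixed dj dk jk r.
have le_y i : descent w i -> invset (w * sref i)%g \subset invset y.
  move=> di; have ri : R (w * sref i)%g (w * sref i)%g.
    by apply: fixed; rewrite -(ninv_mulsref_descent di).
  by apply/(auto_invset_sub hR ri r); rewrite invset_mulsref_descent // subD1set.
have pair_neq : (vpos w j.+1, vpos w j) != (vpos w k.+1, vpos w k).
  rewrite xpair_eqE negb_and; apply/orP; right; apply: contra jk.
  by move=> /eqP /(vpos_inj (ltnW (ltn_ord j)) (ltnW (ltn_ord k))) /val_inj ->.
have -> : invset w = invset (w * sref j)%g :|: invset (w * sref k)%g.
  apply/setP => x; rewrite !invset_mulsref_descent // in_setU !in_setD1 -andb_orl.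
  by have [->|] := eqVneq x (vpos w j.+1, vpos w j); rewrite ?pair_neq.
by rewrite subUset !le_y.
Qed.

Lemma auto_fixed_of_two_descents R w (j k : 'I_n) : sref_fixing_auto R ->
  (forall u, ninv u < ninv w -> R u u) ->
  descent w j -> descent w k -> j != k -> R w w.
Proof.
move=> hR fixed dj dk jk; apply: auto_fixed_of_le => // [y|z].
  exact: auto_le_of_two_descents fixed dj dk jk.
exact: auto_le_of_two_descents (auto_converse hR) fixed dj dk jk.
Qed.

Lemma auto_image_cover R w y (j : 'I_n) : sref_fixing_auto R ->
  R (w * sref j)%g (w * sref j)%g -> descent w j -> R w y ->
  exists2 k, descent y k & (y * sref k)%g = (w * sref j)%g.
Proof.
move=> hR ru dj r; set u := (w * sref j)%g in ru *.
have nw : ninv w = (ninv u).+1 by rewrite (ninv_mulsref_descent dj).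
have uw : invset u \subset invset w by rewrite invset_mulsref_descent // subD1set.
have uy : invset u \subset invset y by apply/(auto_invset_sub hR ru r).
have /invset_proper_step [k asc ky] : invset u \proper invset y.
  rewrite properEneq uy andbT.
  apply/eqP => /invset_inj uy'; rewrite -uy' in r.
  by move: nw; rewrite (auto_injective hR r ru); lia.
have y'E := invset_mulsref_ascent asc.
have y'y : invset (u * sref k)%g \subset invset y by rewrite y'E subUset sub1set ky.
have [z rz] := auto_surjective hR (u * sref k)%g.
have uz : invset u \subset invset z.
  by apply/(auto_invset_sub hR ru rz); rewrite y'E subsetU1.
have zw : invset z \subset invset w by apply/(auto_invset_sub hR rz r).
have zu : z != u.
  apply/eqP => ezu; rewrite ezu in rz.
  by have := descent_mulsref u k; rewrite (auto_functional hR rz ru); case: (descent u k).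
have uz' : invset u \proper invset z.
  by rewrite properEneq uz andbT; apply: contra_neq zu => /invset_inj ->.
(* z lies strictly above u and below w, which covers u. *)
have ezw : z = w.
  apply: invset_inj; apply/eqP; rewrite eqEcard zw /= -/(ninv w) nw.
  exact: proper_card uz'.
rewrite ezw in rz; have ey := auto_functional hR r rz.
exists k; first by rewrite ey descent_mulsref.
by rewrite ey -mulgA tperm2 mulg1.
Qed.

Lemma auto_fixed_of_single_descent R w (j : 'I_n) : sref_fixing_auto R ->
  (forall u, ninv u < ninv w -> R u u) -> single_descent w j -> R w w.
Proof.
move=> hR fixed sw; have [dj _] := sw.
have ru : R (w * sref j)%g (w * sref j)%g.
  by apply: fixed; rewrite -(ninv_mulsref_descent dj).
have [y r] := auto_total hR w.
have [k dk eu] := auto_image_cover hR ru dj r.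
suff ey : w = y :> P by rewrite {2}ey.
have ny : ninv y = ninv w by rewrite -(ninv_mulsref_descent dk) eu (ninv_mulsref_descent dj).
have [[k' k'k dk'] | sy] := descent_cases dk.
  have ryy : R y y by apply: (auto_fixed_of_two_descents hR) dk' dk k'k; rewrite ny.
  exact: (auto_injective hR r ryy).
apply: single_descent_eq sw sy (esym eu) _ => c.
have rc := auto_fixed_parabolic_longest c hR.
by apply/idP/idP => /(auto_invset_sub hR r rc).
Qed.

Lemma auto_fixed R : sref_fixing_auto R -> forall w, R w w.
Proof.
move=> hR w; move hm: (ninv w) => m; elim/ltn_ind: m w hm => m IH w hm.
have fixed u : ninv u < ninv w -> R u u by rewrite hm => hu; exact: IH hu u erefl.
have [w0 | /descent_exists [j dj]] := eqVneq (invset w) set0.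
  by apply: auto_fixed_of_le => // y _; rewrite w0 sub0set.
have [[k kj dk] | sw] := descent_cases dj.
  exact: auto_fixed_of_two_descents hR fixed dk dj kj.
exact: auto_fixed_of_single_descent hR fixed sw.
Qed.

End Automorphisms.

Section ModuleIsomorphisms.
Import GRing.Theory.
Local Open Scope ring_scope.
Variables (k : fieldType) (A : falgType k).
Implicit Types M N P : rmod A.

Lemma is_hom_mul M N P (f : 'M[k]_(rdim M, rdim N)) (g : 'M[k]_(rdim N, rdim P)) :
  is_hom f -> is_hom g -> is_hom (f *m g).
Proof. by move=> hf hg a; rewrite mulmxA hf -mulmxA hg mulmxA. Qed.

Lemma iso_refl M : iso M M.
Proof. by exists 1%:M, 1%:M; split; rewrite ?mulmx1 // => a; rewrite mulmx1 mul1mx. Qed.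

Lemma iso_sym M N : iso M N -> iso N M.
Proof. by case=> f [g [hf hg fg gf]]; exists g, f. Qed.

Lemma iso_trans M N P : iso M N -> iso N P -> iso M P.
Proof.
case=> f [g [hf hg fg gf]] [f' [g' [hf' hg' fg' gf']]].
exists (f *m f'), (g' *m g); split; try exact: is_hom_mul.
  by rewrite mulmxA -(mulmxA f) fg' mulmx1 fg.
by rewrite mulmxA -(mulmxA g') gf mulmx1 gf'.
Qed.

Lemma iso_dsum M M' N N' : iso M M' -> iso N N' -> iso (dsum M N) (dsum M' N').
Proof.
case=> f [g [hf hg fg gf]] [f' [g' [hf' hg' fg' gf']]].
exists (block_mx f 0 0 f'), (block_mx g 0 0 g').
rewrite /is_hom /= !mulmx_block !mulmx0 !mul0mx !addr0 !add0r fg fg' gf gf'.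
rewrite -!scalar_mx_block; split=> // a.
  by rewrite !mulmx_block !mulmx0 !mul0mx !addr0 !add0r hf hf'.
by rewrite !mulmx_block !mulmx0 !mul0mx !addr0 !add0r hg hg'.
Qed.

Lemma iso_mpow M M' (r : nat) : iso M M' -> iso (mpow M r) (mpow M' r).
Proof. by move=> h; elim: r => [|r IH] /=; [exact: iso_refl | exact: iso_dsum]. Qed.

Lemma inFac_iso M M' N : iso M M' -> inFac M N -> inFac M' N.
Proof.
move=> h [r [f [hf /row_fullP [B hB]]]].
have [F [G [hF hG FG GF]]] := iso_mpow r (iso_sym h).
exists r, (F *m f); split; first exact: is_hom_mul.
by apply/row_fullP; exists (B *m G); rewrite -mulmxA (mulmxA G) GF mul1mx.
Qed.

Lemma fac_le_iso M M' N N' : iso M M' -> iso N N' -> fac_le M N -> fac_le M' N'.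
Proof.
move=> hM hN le P hP /(inFac_iso (iso_sym hM)) /(le _ hP).
exact: inFac_iso hN.
Qed.

End ModuleIsomorphisms.

Theorem proposition5p1 (k : closedFieldType) (A : falgType k) (n : nat)
    (rho rho' : {perm 'I_n.+1} -> rmod A) :
  basic_algebra A ->
  poset_iso_stt rho -> poset_iso_stt rho' ->
  (forall i : 'I_n, iso (rho (sref i)) (rho' (sref i))) ->
  forall w : {perm 'I_n.+1}, iso (rho w) (rho' w).
Proof.
move=> _ [stt1 le1 inj1 surj1] [stt2 le2 inj2 surj2] atoms.
apply: (@auto_fixed n (fun w v => iso (rho w) (rho' v))); split => //.
- by move=> w; have [v] := surj2 _ (stt1 w); exists v.
- by move=> w v v' r r'; apply: inj2; exact: iso_trans (iso_sym r) r'.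
- by move=> w w' v r r'; apply: inj1; exact: iso_trans r (iso_sym r').
- by move=> v; have [w /iso_sym] := surj1 _ (stt2 v); exists w.
- move=> w w' v v' r r'; rewrite -!weak_leE le1 le2.
  by split; apply: fac_le_iso => //; exact: iso_sym.
Qed.
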